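(* Let $K$ be a field of characteristic $0$ with henselian valuation ring $A$, maximal ideal $\mathfrak{m}_A$, valuation $v$ and residue field of characteristic $p>0$, containing a primitive $p$-th root of unity $\zeta$; put $\mathfrak{z}=\zeta-1$. Let $L|K$ be a Kummer extension of degree $p$ with defect $p$, $B$ the integral closure of $A$ in $L$, and let $\mathscr{S}=\{\alpha\in L: \alpha^p=h\in A^\times,\ h-1\in\mathfrak{m}_A,\ K(\alpha)=L\}$. For $\alpha\in\mathscr{S}$ let $\alpha'=\gamma_\alpha(\alpha-1)/\mathfrak{z}$ with $\gamma_\alpha\in A$ chosen so that $\alpha'\in B^\times$. If $\alpha_1,\alpha_2\in\mathscr{S}$ satisfy $v(\alpha_1-1)\le v(\alpha_2-1)$, then $A[\alpha_1']\subset A[\alpha_2']$.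
   Context: $v$ also denotes its unique extension to $L$. Defect $p$ means $(v(L^\times):v(K^\times))=1$ and the residue extension is trivial, although $[L:K]=p$. *)

From HB Require Import structures.
From mathcomp Require Import all_boot all_order all_algebra all_field.
Set Implicit Arguments. Unset Strict Implicit. Unset Printing Implicit Defensive.
Import Order.TTheory GRing.Theory Num.Theory.
Local Open Scope ring_scope.

(* Valuation theory via valuation rings.  A valuation v on a field F is
   represented (up to equivalence) by its valuation ring O = {x | v x >= 0}. *)

Section ValRing.
Variable F : fieldType.
Implicit Types (O : {pred F}) (x y : F).

Definition is_subring O : Prop :=
  [/\ 0 \in O, 1 \in O,
      (forall x y, x \in O -> y \in O -> x - y \in O) &
      (forall x y, x \in O -> y \in O -> x * y \in O)].

Definition is_valuation_ring O : Prop :=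
  is_subring O /\ (forall x, x != 0 -> x \in O \/ x^-1 \in O).

Definition vunit O x : Prop := [/\ x \in O, x != 0 & x^-1 \in O].

Definition vmax O x : Prop := x \in O /\ ~ vunit O x.

(* v x <= v y  for the valuation v with valuation ring O *)
Definition vle O x y : Prop := y = 0 \/ (x != 0 /\ y / x \in O).

Definition polyIn O (q : {poly F}) : Prop := forall i, q`_i \in O.

(* henselian valuation ring (Hensel's lemma for simple residual roots) *)
Definition henselian O : Prop :=
  forall (f : {poly F}) (a : F), f \is monic -> polyIn O f -> a \in O ->
    vmax O f.[a] -> vunit O (f^`()).[a] ->
    exists2 b, b \in O & f.[b] = 0 /\ vmax O (b - a).
End ValRing.

Section Ext.
Variables (K : fieldType) (L : fieldExtType K).

Definition int_closure (A : {pred K}) (x : L) : Prop :=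
  exists2 q : {poly K}, q \is monic /\ polyIn A q & (map_poly (in_alg L) q).[x] = 0.

Definition int_closure_unit (A : {pred K}) (x : L) : Prop :=
  [/\ int_closure A x, x != 0 & int_closure A x^-1].

Definition adjoin_ring (A : {pred K}) (b : L) (x : L) : Prop :=
  exists2 q : {poly K}, polyIn A q & x = (map_poly (in_alg L) q).[b].

Definition extends_valring (A : {pred K}) (O : {pred L}) : Prop :=
  is_valuation_ring O /\ (forall c : K, (c%:A \in O) <-> (c \in A)).

Definition generates (a : L) : Prop := <<1%VS; a>>%VS = fullv.

Definition kummer_deg (p : nat) : Prop :=
  \dim {:L} = p /\ exists a : L, exists c : K, a ^+ p = c%:A /\ generates a.

(* defect p (given [L:K] = p): value group index 1 and trivial residue
   extension, for the extension O of the valuation ring A to L. *)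
Definition immediate (A : {pred K}) (O : {pred L}) : Prop :=
  (forall y : L, y != 0 -> exists c : K, c != 0 /\ vunit O (y / c%:A)) /\
  (forall b : L, b \in O -> exists2 a : K, a \in A & vmax O (b - a%:A)).

Definition kummer_gen (A : {pred K}) (p : nat) (a : L) : Prop :=
  exists h : K, [/\ a ^+ p = h%:A, vunit A h, vmax A (h - 1) & generates a].
End Ext.

(* By Kummer theory, a2 generates L and a1^p lies in K, so a1 = c a2^j with
   c in K, and c lies in A because a1, a2 are units of the valuation ring O
   over A.  Writing bi = ai - 1 and si = gi/(zeta - 1), so that ai' = si bi,
   we get b1 = Q(b2) for Q = c (1 + X)^j - 1 in A[X], hence a1' = P(a2') with
   P_i = s1 s2^-i Q_i = a1' a2'^-i (Q_i b2^i / b1).  Here a1', a2'^-1 lie in O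
   because O is integrally closed, and Q_i b2^i / b1 lies in O because
   v(b1) <= v(b2) (for i = 0 use Q_0 = b1 - sum_(i>0) Q_i b2^i).  As O meets K
   in A, P has coefficients in A, so A[a1'] is contained in A[a2']. *)

From HB Require Import structures.
From mathcomp Require Import all_boot all_order all_algebra all_field.
From mathcomp Require Import ring.
Import Order.TTheory GRing.Theory Num.Theory.
Set Implicit Arguments.
Unset Strict Implicit.
Unset Printing Implicit Defensive.
Local Open Scope ring_scope.

Lemma is_subringP (F : fieldType) (S : {pred F}) :
  is_subring S -> GRing.subring_closed S.
Proof. by case. Qed.

Lemma polyInP (F : fieldType) (S : addrClosed F) (q : {poly F}) :
  reflect (polyIn S q) (q \is a polyOver S).
Proof. exact: polyOverP. Qed.

Section Subring.
Variables (F : fieldType) (O : {pred F}).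
Hypothesis subO : is_subring O.

#[local] HB.instance Definition _ :=
  GRing.isSubringClosed.Build F O (is_subringP subO).

Lemma vle_horner_term i (q : {poly F}) b1 b2 :
  q \is a polyOver O -> b2 \in O -> vle O b1 b2 -> q.[b2] = b1 ->
  q`_i * b2 ^+ i / b1 \in O.
Proof.
move=> /polyOverP qO b2O le12 qb2.
have b21O : b2 / b1 \in O by case: le12 => [->|[]]; rewrite ?mul0r ?rpred0.
case: i => [|i]; last first.
  by rewrite exprSr mulrA -(mulrA _ b2) rpredM // rpredM ?rpredX.
have [->|b1_0] := eqVneq b1 0; first by rewrite invr0 mulr0 rpred0.
have [n sz_q] : exists n, (size q <= n.+1)%N by exists (size q).
have q0E : q`_0 = b1 - \sum_(i < n) q`_i.+1 * b2 ^+ i.+1.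
  by rewrite -qb2 (horner_coef_wide _ sz_q) big_ord_recl expr0 mulr1 addrK.
rewrite expr0 mulr1 q0E mulrBl divff // rpredB ?rpred1 // mulr_suml.
apply: rpred_sum => i _.
by rewrite exprSr mulrA -(mulrA _ b2) rpredM // rpredM ?rpredX.
Qed.

End Subring.

Section ValuationRing.
Variables (F : fieldType) (O : {pred F}).
Hypothesis valO : is_valuation_ring O.

#[local] HB.instance Definition _ :=
  GRing.isSubringClosed.Build F O (is_subringP valO.1).

Lemma valring_integral (q : {poly F}) x :
  q \is monic -> q \is a polyOver O -> root q x -> x \in O.
Proof.
move=> q_monic /polyOverP qO /rootP qx.
have [->|x0] := eqVneq x 0; first exact: rpred0.
have [//|yO] := valO.2 x x0; set y := x^-1 in yO.
have [n sz_q] : exists n, size q = n.+1.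
  by exists (size q).-1; rewrite prednK // lt0n size_poly_eq0 monic_neq0.
have lead_q : q`_n = 1 by move/monicP: q_monic; rewrite lead_coefE sz_q.
have xy_pow i : (i < n)%N -> x ^+ i * y ^+ n = y * y ^+ (n - i.+1).
  move=> lt_in; rewrite -exprS subnSK // -{1}(subnK (ltnW lt_in)) exprD.
  by rewrite mulrCA -exprMn mulfV // expr1n mulr1.
set w := \sum_(i < n) q`_i * y ^+ (n - i.+1).
(* multiplying [q.[x] = 0] by [y ^+ n] gives [y * w + 1 = 0], hence [x = - w] *)
have yw : y * w = -1.
  have : q.[x] * y ^+ n = y * w + 1.
    rewrite horner_coef sz_q big_ord_recr /= lead_q mul1r mulrDl -(exprMn n).
    rewrite mulfV // expr1n mulr_suml mulr_sumr; congr (_ + 1).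
    by apply: eq_bigr => i _; rewrite -mulrA xy_pow // mulrCA.
  by rewrite qx mul0r => /esym/eqP; rewrite (addr_eq0 (y * w)) => /eqP.
have -> : x = - w.
  by rewrite -[x]mulr1 -[1]opprK -yw mulrN mulrA mulfV // mul1r.
by rewrite rpredN rpred_sum // => i _; rewrite rpredM ?rpredX.
Qed.

Lemma valring_root_mem x n : (0 < n)%N -> x ^+ n \in O -> x \in O.
Proof.
move=> n_gt0 xnO; apply: (valring_integral (monicXnsubC (x ^+ n) n_gt0)).
  by rewrite polyOverXnsubC.
by rewrite rootE !hornerE subrr.
Qed.

Lemma vunit_root x n : (0 < n)%N -> vunit O (x ^+ n) -> vunit O x.
Proof.
move=> n_gt0 [xnO xn0 xnVO].
have x0 : x != 0 by apply: contraNneq xn0 => ->; rewrite expr0n gtn_eqF.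
by split; rewrite // (valring_root_mem n_gt0) // exprVn.
Qed.

End ValuationRing.

Section AdjoinRing.
Variables (K : fieldType) (L : fieldExtType K) (A : {pred K}).
Hypothesis subA : is_subring A.

#[local] HB.instance Definition _ :=
  GRing.isSubringClosed.Build K A (is_subringP subA).

Lemma adjoin_ring_trans (b1 b2 x : L) :
  adjoin_ring A b2 b1 -> adjoin_ring A b1 x -> adjoin_ring A b2 x.
Proof.
move=> [q /polyInP qA ->] [r /polyInP rA ->]; exists (r \Po q).
  by apply/polyInP; rewrite polyOver_comp.
by rewrite map_comp_poly horner_comp.
Qed.

End AdjoinRing.

Section LyingOver.
Variables (K : fieldType) (L : fieldExtType K) (A : {pred K}) (O : {pred L}).
Hypothesis extO : extends_valring A O.

Let valO : is_valuation_ring O := extO.1.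

#[local] HB.instance Definition _ :=
  GRing.isSubringClosed.Build L O (is_subringP valO.1).

Lemma in_algO c : (c%:A \in O) = (c \in A).
Proof. by apply/idP/idP; apply extO.2. Qed.

Let subring_closedA : GRing.subring_closed A.
Proof.
split=> [|x y|x y]; rewrite -!in_algO ?scale1r ?rpred1 // => xO yO.
  by rewrite scalerBl rpredB.
by rewrite -!in_algE rmorphM rpredM.
Qed.

#[local] HB.instance Definition _ :=
  GRing.isSubringClosed.Build K A subring_closedA.

Lemma polyOver_alg (q : {poly K}) :
  q \is a polyOver A -> map_poly (in_alg L) q \is a polyOver O.
Proof.
by move=> /polyOverP qA; apply/polyOverP => i; rewrite coef_map /= in_algO.
Qed.

Lemma int_closure_mem x : int_closure A x -> x \in O.
Proof.
move=> [q [q_monic qA] /rootP qx]; apply: (valring_integral valO _ _ qx).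
  by rewrite map_monic.
by apply/polyOver_alg/polyInP.
Qed.

Lemma vunit_alg c : vunit A c -> vunit O c%:A.
Proof.
move=> [cA c0 cVA]; split; rewrite ?in_algO //.
  by rewrite scaler_eq0 oner_eq0 orbF.
by move: cVA; rewrite -in_algO -in_algE fmorphV.
Qed.

Lemma vunit_pure_root a n c :
  (0 < n)%N -> a ^+ n = c%:A -> vunit A c -> vunit O a.
Proof. by move=> n_gt0 an /vunit_alg; rewrite -an; apply: vunit_root. Qed.

Lemma adjoin_ring_scaled (q : {poly K}) (s1 s2 : K) (b1 b2 : L) :
  q \is a polyOver A -> (map_poly (in_alg L) q).[b2] = b1 ->
  b2 \in O -> vle O b1 b2 ->
  s1%:A * b1 \in O -> s2%:A * b2 != 0 -> (s2%:A * b2)^-1 \in O ->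
  adjoin_ring A (s2%:A * b2) (s1%:A * b1).
Proof.
move=> qA qb2 b2O le12 u1O u2_0 u2VO.
have /andP[s2_0 b2_0] : (s2 != 0) && (b2 != 0).
  by move: u2_0; rewrite mulf_eq0 negb_or scaler_eq0 oner_eq0 orbF.
have b1_0 : b1 != 0 by case: le12 => [/eqP|[]//]; rewrite (negbTE b2_0).
set qL := map_poly (in_alg L) q in qb2.
exists (\poly_(i < size q) (s1 * s2 ^- i * q`_i)).
  move=> i; rewrite coef_poly; case: ifP => _; last exact: rpred0.
  rewrite -in_algO.
  have -> : (s1 * s2 ^- i * q`_i)%:A =
      (s1%:A * b1) * ((s2%:A * b2)^-1) ^+ i * (qL`_i * b2 ^+ i / b1).
    rewrite coef_map exprVn exprMn -!in_algE !(rmorphM, fmorphV, rmorphXn).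
    by field; rewrite ?expf_eq0 ?fmorph_eq0 ?(negbTE b1_0) ?(negbTE b2_0)
                      ?(negbTE s2_0) ?andbF.
  apply: rpredM; first by rewrite rpredM ?rpredX.
  exact: (vle_horner_term valO.1 i (polyOver_alg qA) b2O le12 qb2).
rewrite (horner_coef_wide _ (_ : size _ <= size q)%N); last first.
  by rewrite size_map_poly size_poly.
rewrite -qb2 horner_coef size_map_poly mulr_sumr; apply: eq_bigr => i _.
rewrite !coef_map coef_poly ltn_ord exprMn /= -!in_algE.
rewrite !(rmorphM, fmorphV, rmorphXn).
by field; rewrite ?expf_eq0 ?fmorph_eq0 ?(negbTE s2_0) ?andbF.
Qed.

Lemma adjoin_ring_kummer (c s1 s2 : K) (a1 a2 : L) (j : nat) :
  a1 \in O -> vunit O a2 -> a1 = c%:A * a2 ^+ j -> vle O (a1 - 1) (a2 - 1) ->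
  s1%:A * (a1 - 1) \in O -> s2%:A * (a2 - 1) != 0 ->
  (s2%:A * (a2 - 1))^-1 \in O ->
  adjoin_ring A (s2%:A * (a2 - 1)) (s1%:A * (a1 - 1)).
Proof.
move=> a1O [a2O a2_0 a2VO] a1E.
have cA : c \in A.
  rewrite -in_algO -[c%:A](mulfK (expf_neq0 j a2_0)) -a1E -exprVn.
  by rewrite rpredM ?rpredX.
apply: (@adjoin_ring_scaled (c%:P * ('X + 1) ^+ j - 1)).
- by rewrite rpredB ?rpredM ?rpredX ?rpredD ?polyOverC ?polyOverX ?rpred1.
- rewrite !(rmorphB, rmorphM, rmorphXn, rmorphD, rmorph1) /= map_polyC map_polyX.
  by rewrite !hornerE subrK a1E.
- by rewrite rpredB ?rpred1.
Qed.

End LyingOver.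

Section KummerGenerator.
Variables (F : fieldType) (L : fieldExtType F).
Variables (n : nat) (zeta : F) (e : L) (h : F).
Hypotheses (dimL : \dim {:L} = n) (gen_e : generates e) (e_n : e ^+ n = h%:A).
Hypothesis zeta_prim : n.-primitive_root zeta.

Let n_gt0 : (0 < n)%N := prim_order_gt0 zeta_prim.

Lemma adjoin_degree_generator : adjoin_degree 1%VS e = n.
Proof. by rewrite adjoin_degreeE gen_e dimL dimv1 divn1. Qed.

Lemma minPoly_generator : minPoly 1%VS e %= 'X^n - (h%:A)%:P.
Proof.
have hK : h%:A \in (1%VS : {vspace L}) by rewrite rpredZ ?mem1v.
rewrite -dvdp_size_eqp ?size_minPoly ?size_XnsubC ?adjoin_degree_generator //.
by rewrite minPoly_dvdp ?polyOverXnsubC // rootE !hornerE e_n subrr.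
Qed.

Lemma root_generator_conj P :
  P \is a polyOver 1%VS -> root P e -> root P (zeta%:A * e).
Proof.
move=> PK Pe; apply: root_dvdp (minPoly_dvdp PK Pe) _.
rewrite (eqp_root minPoly_generator) rootE !hornerE exprMn e_n -in_algE.
by rewrite -rmorphXn (prim_expr_order zeta_prim) rmorph1 mul1r subrr.
Qed.

Lemma kummer_power_of_generator a c :
  a ^+ n = c%:A -> exists b : F, exists j : nat, a = b%:A * e ^+ j.
Proof.
move=> a_n; have [->|a0] := eqVneq a 0.
  by exists 0, 0%N; rewrite scale0r mul0r.
pose z : L := zeta%:A.
have z_prim : n.-primitive_root z by rewrite /z -in_algE fmorph_primitive_root.
pose f := Fadjoin_poly 1%VS e a.
have fK : f \is a polyOver 1%VS := Fadjoin_polyOver 1%VS e a.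
have fe : f.[e] = a by apply: Fadjoin_poly_eq; rewrite gen_e memvf.
have f_size : (size f <= n)%N.
  by rewrite -adjoin_degree_generator size_Fadjoin_poly.
have [k fzeE] : exists k : 'I_n, f.[z * e] = z ^+ k * a.
  have : root (f ^+ n - (c%:A)%:P) (z * e).
    apply: root_generator_conj.
      by rewrite rpredB ?rpredX ?polyOverC ?rpredZ ?mem1v.
    by rewrite rootE !hornerE fe a_n subrr.
  rewrite rootE !hornerE subr_eq0 -a_n => /eqP fzen.
  have unity : (f.[z * e] / a) ^+ n = 1.
    by rewrite expr_div_n fzen divff // expf_neq0.
  have [k kE] := prim_rootP z_prim unity.
  by exists k; rewrite -kE divfK.
have f_coef i : (i < n)%N -> i != k -> f`_i = 0.
  pose g := \poly_(i < n) (f`_i * (z ^+ i - z ^+ k)).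
  have gK : g \is a polyOver 1%VS.
    apply: polyOver_poly => j _.
    by rewrite rpredM ?rpredB ?rpredX ?rpredZ ?mem1v ?(polyOverP fK).
  have ge : g.[e] = f.[z * e] - z ^+ k * f.[e].
    rewrite horner_poly !(horner_coef_wide _ f_size) mulr_sumr -sumrB.
    by apply: eq_bigr => j _; rewrite exprMn; ring.
  have : root g e by rewrite rootE ge fzeE fe subrr.
  rewrite (@root_small_adjoin_poly _ _ 1%AS) ?adjoin_degree_generator //;
    last exact: size_poly.
  move=> /eqP g0.
  move=> lt_in neq_ik; have /eqP := congr1 (fun q : {poly L} => q`_i) g0.
  rewrite coef_poly lt_in coef0 mulf_eq0 subr_eq0 (eq_prim_root_expr z_prim).
  by rewrite !modn_small // (negbTE neq_ik) orbF => /eqP.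
have [b fkE] : exists b, f`_k = b%:A by apply/vlineP; exact: (polyOverP fK k).
exists b, k; rewrite -fe (horner_coef_wide _ f_size) (bigD1 k) //= big1 ?addr0.
  by rewrite fkE.
by move=> i neq_ik; rewrite f_coef ?mul0r.
Qed.

End KummerGenerator.

Theorem lemma5p3 (K : fieldType) (L : fieldExtType K)
  (A : {pred K}) (O : {pred L}) (p : nat) (zeta : K)
  (a1 a2 : L) (g1 g2 : K) :
  [pchar K] =i pred0 ->
  is_valuation_ring A -> henselian A ->
  prime p -> vmax A (p%:R) ->
  p.-primitive_root zeta ->
  kummer_deg L p ->
  extends_valring A O ->
  immediate A O ->
  kummer_gen A p a1 -> kummer_gen A p a2 ->
  g1 \in A -> g2 \in A ->
  int_closure_unit A (g1%:A * (a1 - 1) / (zeta - 1)%:A) ->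
  int_closure_unit A (g2%:A * (a2 - 1) / (zeta - 1)%:A) ->
  vle O (a1 - 1) (a2 - 1) ->
  forall x : L,
    adjoin_ring A (g1%:A * (a1 - 1) / (zeta - 1)%:A) x ->
    adjoin_ring A (g2%:A * (a2 - 1) / (zeta - 1)%:A) x.
Proof.
move=> _ valA _ _ _ zeta_prim [dimL _] extO _ [h1 [a1_p h1_unit _ _]]
  [h2 [a2_p h2_unit _ gen_a2]] _ _ [u1_int _ _] [_ u2_0 u2V_int] le12 x.
have p_gt0 := prim_order_gt0 zeta_prim.
have scaleE g (b : L) : g%:A * b / (zeta - 1)%:A = (g / (zeta - 1))%:A * b.
  by rewrite -!in_algE fmorph_div mulrAC.
rewrite !scaleE in u1_int u2_0 u2V_int *.
have [c [j a1E]] := kummer_power_of_generator dimL gen_a2 a2_p zeta_prim a1_p.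
have [a1O _ _] := vunit_pure_root extO p_gt0 a1_p h1_unit.
have a2_unit := vunit_pure_root extO p_gt0 a2_p h2_unit.
apply: (adjoin_ring_trans valA.1).
apply: (adjoin_ring_kummer extO a1O a2_unit a1E le12 _ u2_0).
  exact (int_closure_mem extO u1_int).
exact (int_closure_mem extO u2V_int).
Qed.
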